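(* Fix integers $d\ge 1$ and $n\ge 1$. There exists a bijection $\phi_d:\mathcal{H}_n\to\mathcal{H}_n$ such that $\mathrm{dif}_d(\lambda)\ge\mathrm{mod}'_d(\phi_d(\lambda))$ for every $\lambda\in\mathcal{H}_n$. Moreover, for every $\lambda\in\mathcal{H}_n$, $\mathrm{dif}_d(\lambda)=0$ if and only if $\mathrm{mod}'_d(\phi_d(\lambda))=0$.
   Context: A partition is a finite nonempty weakly decreasing sequence $\lambda=(\lambda_1,\ldots,\lambda_k)$ of positive integers; $\ell(\lambda)=k$. The perimeter is $\Gamma(\lambda)=\lambda_1+\ell(\lambda)-1$; $\mathcal{H}_n$ is the set of partitions with perimeter $n$. $\mathrm{dif}_d(\lambda)=|\{i:1\le i<\ell(\lambda),\ \lambda_i-\lambda_{i+1}<d\}|$ and $\mathrm{mod}'_d(\lambda)=|\{i:1\le i\le\ell(\lambda),\ \lambda_i\not\equiv 1\pmod{d+1}\}|$. *)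

From mathcomp Require Import all_boot.
Set Implicit Arguments. Unset Strict Implicit. Unset Printing Implicit Defensive.

Definition is_partition (l : seq nat) : bool :=
  [&& l != [::], sorted geq l & all (fun x => 0 < x) l].

Definition perimeter (l : seq nat) : nat := head 0 l + size l - 1.

Definition inH (n : nat) (l : seq nat) : bool :=
  is_partition l && (perimeter l == n).

(* dif_d(λ) = #{ i : 1 <= i < ℓ(λ), λ_i - λ_{i+1} < d }  (0-indexed below) *)
Definition dif (d : nat) (l : seq nat) : nat :=
  count (fun i => nth 0 l i - nth 0 l i.+1 < d) (iota 0 (size l).-1).

Definition modp' (d : nat) (l : seq nat) : nat :=
  count (fun x => x %% d.+1 != 1 %% d.+1) l.

From mathcomp Require Import all_boot zify.
Set Implicit Arguments. Unset Strict Implicit. Unset Printing Implicit Defensive.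

(* A partition of perimeter n is built from (1) by n - 1 moves, each of which
   either adds a new largest part equal to the current largest part or increases
   the largest part by one; this identifies H_n with the boolean words of length
   n - 1. phi_d replays the moves of lambda while building its image, copying each
   move except when the largest part of the image built so far is congruent to 1
   mod d+1, where it makes the other move. Since that test only reads the image,
   the recoding can be undone, so phi_d is a bijection. Along the way the residue
   s of (largest part of the image) - 1 stays ahead of the first gap g of lambda
   (g < s whenever s <> 0), so a part of the image not congruent to 1 is frozen
   only by a copied new-part move, at a moment when g < s <= d: each frozen part
   counted by mod'_d is matched by a gap counted by dif_d. *)

Definition grow (l : seq nat) (b : bool) : seq nat :=
  if l is h :: t then (if b then h :: h :: t else h.+1 :: t) else l.

Definition of_word (w : seq bool) : seq nat := foldl grow [:: 1] w.

Fixpoint to_word (l : seq nat) : seq bool :=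
  if l is h :: t then
    if t is h2 :: _ then to_word t ++ true :: nseq (h - h2) false
    else nseq h.-1 false
  else [::].

Lemma of_word_rcons w b : of_word (rcons w b) = grow (of_word w) b.
Proof. exact: foldl_rcons. Qed.

Lemma is_partition_grow l b : is_partition l -> is_partition (grow l b).
Proof.
case: l => [|h t] //; rewrite /is_partition /= => /and3P[tS h0 tP].
case: b => /=; first by rewrite leqnn tS h0 tP.
by rewrite tP andbT; case: t tS {tP} => [|h2 t] //= /andP[/leqW -> ->].
Qed.

Lemma is_partition_of_word w : is_partition (of_word w).
Proof. by elim/last_ind: w => // w b IHw; rewrite of_word_rcons is_partition_grow. Qed.

Lemma perimeter_of_word w : perimeter (of_word w) = (size w).+1.
Proof.
elim/last_ind: w => // w b IHw; rewrite of_word_rcons size_rcons -IHw.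
by case: (of_word w) (is_partition_of_word w) => // h t _; case: b; rewrite /perimeter /=; lia.
Qed.

Lemma foldl_grow_nseq h t k : foldl grow (h :: t) (nseq k false) = (h + k) :: t.
Proof. by elim: k h => [|k IHk] h /=; rewrite ?addn0 // IHk addSnnS. Qed.

Lemma of_word_to_word l : is_partition l -> of_word (to_word l) = l.
Proof.
elim: l => // h t IHt; rewrite /is_partition /= => /and3P[tS h0 tP].
case: t IHt tS tP => [|h2 t] IHt /=.
  by rewrite /of_word foldl_grow_nseq; case: h h0.
move=> /andP[h2h tS] /andP[h20 tP].
rewrite /of_word foldl_cat -/(of_word _) IHt; last by rewrite /is_partition /= tS h20 tP.
by rewrite /= foldl_grow_nseq subnKC.
Qed.

Lemma to_word_grow l b : is_partition l -> to_word (grow l b) = rcons (to_word l) b.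
Proof.
case: l => // h t; rewrite /is_partition /= => /and3P[tS h0 _].
case: b => /=; first by rewrite subnn cats1.
have nseqSr k : nseq k.+1 false = rcons (nseq k false) false.
  by rewrite -cats1 -addn1 nseqD.
case: t tS => [|h2 t] /=; first by rewrite -nseqSr prednK.
by move=> /andP[h2h _]; rewrite subSn // nseqSr rcons_cat.
Qed.

Lemma to_word_of_word w : to_word (of_word w) = w.
Proof.
elim/last_ind: w => // w b IHw.
by rewrite of_word_rcons to_word_grow ?IHw // is_partition_of_word.
Qed.

Lemma inH_of_word n w : 0 < n -> inH n (of_word w) = (size w == n.-1).
Proof. by move=> n0; rewrite /inH is_partition_of_word perimeter_of_word; lia. Qed.

Lemma size_to_word n l : 0 < n -> inH n l -> size (to_word l) = n.-1.
Proof.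
move=> n_gt0 lH; apply/eqP; rewrite -(inH_of_word (to_word l) n_gt0) of_word_to_word //.
by case/andP: lH.
Qed.

Section Recode.

Variable flip : seq nat -> bool.

Fixpoint recode (mu : seq nat) (x : seq bool) : seq bool :=
  if x is b :: x' then let o := flip mu (+) b in o :: recode (grow mu o) x'
  else [::].

Fixpoint decode (mu : seq nat) (y : seq bool) : seq bool :=
  if y is o :: y' then flip mu (+) o :: decode (grow mu o) y' else [::].

Lemma recodeK mu : cancel (recode mu) (decode mu).
Proof. by move=> x; elim: x mu => [|b x IHx] mu //=; rewrite addKb IHx. Qed.

Lemma decodeK mu : cancel (decode mu) (recode mu).
Proof. by move=> y; elim: y mu => [|o y IHy] mu //=; rewrite addKb IHy. Qed.

Lemma size_recode mu x : size (recode mu x) = size x.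
Proof. by elim: x mu => [|b x IHx] mu //=; rewrite IHx. Qed.

End Recode.

Lemma bij_inH_of_word n (f g : seq bool -> seq bool) :
    0 < n -> cancel f g -> cancel g f -> (forall w, size (f w) = size w) ->
    let phi l := of_word (f (to_word l)) in
    [/\ {in inH n, forall l, inH n (phi l)},
        {in inH n &, injective phi} &
        {in inH n, forall m, exists2 l, inH n l & phi l = m}].
Proof.
move=> n_gt0 fK gK size_f phi.
have size_g w : size (g w) = size w by rewrite -{2}(gK w) size_f.
have part_inH l : inH n l -> is_partition l by case/andP.
split.
- by move=> l lH; rewrite /phi inH_of_word // size_f (size_to_word n_gt0 lH).
- move=> l1 l2 /part_inH l1P /part_inH l2P /(congr1 to_word).
  by rewrite !to_word_of_word => /(can_inj fK)/(congr1 of_word); rewrite !of_word_to_word.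
- move=> m mH; exists (of_word (g (to_word m))).
    by rewrite inH_of_word // size_g (size_to_word n_gt0 mH).
  by rewrite /phi to_word_of_word gK of_word_to_word // part_inH.
Qed.

Lemma dif_cons d h t :
  dif d (h :: t) = ((t != [::]) && (h - head 0 t < d)) + dif d t.
Proof.
case: t => [|h2 t] //.
by rewrite /dif /= -[1]/(1 + 0) iotaDl count_map.
Qed.

Lemma modp'_cons d a t :
  modp' d (a :: t) = (a %% d.+1 != 1 %% d.+1) + modp' d t.
Proof. by []. Qed.

Lemma modnS_residue d k :
  k.+1 %% d.+1 = if k %% d.+1 == d then 0 else (k %% d.+1).+1.
Proof.
have := ltn_pmod k (ltn0Sn d); rewrite -[k.+1]addn1 -modnDml.
by case: eqP => [->|ne] lt_kd; [rewrite addn1 modnn | rewrite modn_small ?addn1 //; lia].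
Qed.

Lemma modnS_neq1 d k : 0 < d -> (k.+1 %% d.+1 != 1 %% d.+1) = (k %% d.+1 != 0).
Proof.
move=> d_gt0; rewrite modnS_residue [1 %% _]modn_small //.
by case: ifP => [/eqP ->|_]; rewrite ?eqSS // -lt0n.
Qed.

Definition head_eq1_mod (d : nat) (m : seq nat) : bool := (head 0 m).-1 %% d.+1 == 0.

(* l = h :: t is the partition read so far and m = h' :: t' its image; the parts
   in t and t' are final. *)
Definition coupled (d : nat) (l m : seq nat) : Prop :=
  if (l, m) is (h :: t, h' :: t') then
    let g := h - head 0 t in let s := h'.-1 %% d.+1 in
    [/\ modp' d t' <= dif d t, 0 < dif d t -> 0 < modp' d t',
        s != 0 -> t != [::] /\ g < s,
        t != [::] -> g < d -> s != g.+1 -> 0 < modp' d t'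
      & head 0 t <= h /\ 0 < h']
  else False.

Lemma coupled_grow d l m b : 0 < d -> coupled d l m ->
  coupled d (grow l b) (grow m (head_eq1_mod d m (+) b)).
Proof.
move=> d_gt0; case: l => [|h t] //; case: m => [|[|k] t'] //; first by case=> _ _ _ _ [].
rewrite /head_eq1_mod /= => -[frozen_le frozen_pos s_ahead gap_lt_d [head_le _]].
have s_le : k %% d.+1 <= d by rewrite -ltnS ltn_pmod.
case: b; case: eqP => s0 /=; split;
  rewrite /= ?dif_cons ?modp'_cons ?modnS_neq1 ?modnS_residue //.
(* Only the residue s matters; abstracting it keeps lia away from %%. *)
all: move: s_le s0 s_ahead gap_lt_d; move: (k %% d.+1) => s.
all: case: t frozen_le frozen_pos head_le => [|h2 t] /=.
all: try case: ifP => /eqP; lia.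
Qed.

Lemma coupled_recode d l m x : 0 < d -> coupled d l m ->
  coupled d (foldl grow l x) (foldl grow m (recode (head_eq1_mod d) m x)).
Proof. by move=> d_gt0; elim: x l m => [|b x IHx] l m //= lm; apply/IHx/coupled_grow. Qed.

Lemma coupled_bounds d l m : 0 < d -> coupled d l m ->
  modp' d m <= dif d l /\ (dif d l = 0 <-> modp' d m = 0).
Proof.
move=> d_gt0; case: l => [|h t] //; case: m => [|[|k] t'] //; first by case=> _ _ _ _ [].
move=> -[frozen_le frozen_pos s_ahead gap_lt_d [head_le _]].
have s_le : k %% d.+1 <= d by rewrite -ltnS ltn_pmod.
rewrite dif_cons modp'_cons modnS_neq1 //.
move: s_le s_ahead gap_lt_d; move: (k %% d.+1) => s.
case: t frozen_le frozen_pos head_le => [|h2 t] /=; (split; [lia | split; lia]).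
Qed.

Definition phi_d (d : nat) (l : seq nat) : seq nat :=
  of_word (recode (head_eq1_mod d) [:: 1] (to_word l)).

Theorem theorem3p6 (d n : nat) : 1 <= d -> 1 <= n ->
  exists phi : seq nat -> seq nat,
    [/\ {in inH n, forall l, inH n (phi l)},
        {in inH n &, injective phi},
        {in inH n, forall m, exists2 l, inH n l & phi l = m},
        {in inH n, forall l, modp' d (phi l) <= dif d l} &
        {in inH n, forall l, dif d l = 0 <-> modp' d (phi l) = 0}].
Proof.
move=> d_gt0 n_gt0; exists (phi_d d).
have [phi_inH phi_inj phi_onto] := bij_inH_of_word n_gt0
  (@recodeK (head_eq1_mod d) [:: 1]) (@decodeK _ [:: 1]) (@size_recode _ [:: 1]).
have phi_bounds w (l := of_word w) (m := of_word (recode (head_eq1_mod d) [:: 1] w)) :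
    modp' d m <= dif d l /\ (dif d l = 0 <-> modp' d m = 0).
  exact/coupled_bounds/coupled_recode.
by split=> // l /andP[lP _]; have [] := phi_bounds (to_word l); rewrite of_word_to_word.
Qed.
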